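(* Let $G=C_2\times C_2\times C_2=\langle n\rangle\times\langle b\rangle\times\langle c\rangle$ and $N=\langle n\rangle$. Let $U=\mathbb{Z}_2^{11}$ (column vectors) with $n,b,c$ acting by the following matrices $A_n,A_b,A_c$ respectively (rows listed top to bottom): $A_n$: (1,0,0,0,0,0,0,0,0,0,0); (0,1,0,0,0,0,0,0,0,0,0); (0,0,1,0,0,0,0,0,0,0,0); (0,0,0,1,0,0,0,0,0,0,0); (0,1,0,0,1,0,0,1,1,1,1); (0,1,0,0,0,1,0,1,1,1,1); (0,−1,0,0,0,0,1,−1,−1,−1,−1); (0,−1,0,0,0,0,0,−1,0,0,0); (0,0,−1,1,0,0,0,0,−1,0,0); (0,−1,1,0,0,0,0,0,0,−1,0); (0,0,0,−1,0,0,0,0,0,0,−1). $A_b$: (1,0,0,0,0,0,0,0,0,0,0); (0,1,0,0,0,0,0,0,0,0,0); (0,0,1,0,0,0,0,0,0,0,0); (0,0,0,1,0,0,0,0,0,0,0); (0,0,0,1,0,1,0,0,0,1,1); (0,1,−1,0,1,0,0,0,0,1,1); (1,0,1,−1,−1,−1,−1,0,0,−1,−1); (0,0,0,0,0,0,0,1,0,0,0); (0,0,0,0,0,0,0,0,1,0,0); (0,−1,1,0,0,0,0,0,0,−1,0); (0,0,0,−1,0,0,0,0,0,0,−1). $A_c$: (1,0,0,0,0,0,0,0,0,0,0); (0,1,0,0,0,0,0,0,0,0,0); (0,0,1,0,0,0,0,0,0,0,0); (0,0,0,1,0,0,0,0,0,0,0); (0,0,0,1,0,0,1,−1,0,−1,0);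 (1,1,0,0,−1,−1,−1,−1,0,−1,0); (0,0,0,−1,1,0,0,1,0,1,0); (0,0,0,0,0,0,0,1,0,0,0); (0,0,−1,1,0,0,0,0,−1,0,0); (0,0,0,0,0,0,0,0,0,1,0); (0,0,0,−1,0,0,0,0,0,0,−1). Then this defines a $\mathbb{Z}_2G$-lattice $U$ such that $U^N$ and $U_N$ are permutation $\mathbb{Z}_2[G/N]$-modules, but $U$ is not a permutation $\mathbb{Z}_2G$-module.
   Context: A $\mathbb{Z}_2G$-lattice is a $\mathbb{Z}_2G$-module free of finite rank over the $2$-adic integers $\mathbb{Z}_2$; it is a permutation module if it has a $\mathbb{Z}_2$-basis that is set-wise preserved by the group. For a module $U$, $U^N=\{u\in U:nu=u\}$ and $U_N=U/I_NU$, where $I_N$ is the augmentation ideal of $\mathbb{Z}_2N$ (so $U_N=U/(1-n)U$); both are $\mathbb{Z}_2[G/N]$-modules. *)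

From HB Require Import structures.
From mathcomp Require Import all_boot all_order all_algebra all_fingroup.
From mathcomp Require Import boolp.
Set Implicit Arguments. Unset Strict Implicit. Unset Printing Implicit Defensive.
Import GRing.Theory.

(* The ring Z_2 of 2-adic integers, as the inverse limit of the Z/2^k Z:    *)
(* an element is a coherent sequence of residues x_k in [0, 2^k) with       *)
(* x_{k+1} mod 2^k = x_k.                                                   *)
Record Z2 := MkZ2 {
  z2v : nat -> nat;
  z2lt : forall k, z2v k < 2 ^ k;
  z2coh : forall k, z2v k.+1 %% 2 ^ k = z2v k }.

HB.instance Definition _ := gen_eqMixin Z2.
HB.instance Definition _ := gen_choiceMixin Z2.

Lemma z2_inj (x y : Z2) : z2v x =1 z2v y -> x = y.
Proof.
case: x y => f fl fc [g gl gc] /= e.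
have efg : f = g by apply: funext.
subst g; congr MkZ2; exact: Prop_irrelevance.
Qed.

Section Z2mk.
Variable f : nat -> nat.
Hypothesis fcoh : forall k, f k.+1 = f k %[mod 2 ^ k].
Lemma z2mk_lt k : f k %% 2 ^ k < 2 ^ k.
Proof. by rewrite ltn_pmod // expn_gt0. Qed.
Lemma z2mk_coh k : f k.+1 %% 2 ^ k.+1 %% 2 ^ k = f k %% 2 ^ k.
Proof. by rewrite modn_dvdm ?dvdn_exp2l ?leqnSn // fcoh. Qed.
Definition z2mk : Z2 := @MkZ2 (fun k => f k %% 2 ^ k) z2mk_lt z2mk_coh.
End Z2mk.

Lemma z2_small (x : Z2) k : z2v x k %% 2 ^ k = z2v x k.
Proof. exact/modn_small/z2lt. Qed.

Definition z2zero : Z2 := @z2mk (fun _ => 0) (fun _ => erefl).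
Definition z2one : Z2 := @z2mk (fun _ => 1) (fun _ => erefl).

Lemma z2add_coh (x y : Z2) k :
  z2v x k.+1 + z2v y k.+1 = z2v x k + z2v y k %[mod 2 ^ k].
Proof. by rewrite -modnDm !z2coh. Qed.
Definition z2add (x y : Z2) : Z2 := @z2mk _ (z2add_coh x y).

Lemma z2mul_coh (x y : Z2) k :
  z2v x k.+1 * z2v y k.+1 = z2v x k * z2v y k %[mod 2 ^ k].
Proof. by rewrite -modnMm !z2coh. Qed.
Definition z2mul (x y : Z2) : Z2 := @z2mk _ (z2mul_coh x y).

Lemma z2opp_coh (x : Z2) k :
  2 ^ k.+1 - z2v x k.+1 = 2 ^ k - z2v x k %[mod 2 ^ k].
Proof.
apply/eqP; rewrite -(eqn_modDr (z2v x k.+1)).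
rewrite subnK ?(ltnW (z2lt x k.+1)) // -modnDmr z2coh.
by rewrite subnK ?(ltnW (z2lt x k)) // modnn expnS modnMl.
Qed.
Definition z2opp (x : Z2) : Z2 := @z2mk _ (z2opp_coh x).

Lemma z2addA : associative z2add.
Proof. by move=> x y z; apply: z2_inj => k /=; rewrite modnDml modnDmr addnA. Qed.
Lemma z2addC : commutative z2add.
Proof. by move=> x y; apply: z2_inj => k /=; rewrite addnC. Qed.
Lemma z2add0 : left_id z2zero z2add.
Proof. by move=> x; apply: z2_inj => k /=; rewrite mod0n add0n z2_small. Qed.
Lemma z2addN : left_inverse z2zero z2opp z2add.
Proof.
move=> x; apply: z2_inj => k /=.
by rewrite modnDml subnK ?(ltnW (z2lt x k)) // modnn mod0n.
Qed.

HB.instance Definition _ := GRing.isZmodule.Build Z2 z2addA z2addC z2add0 z2addN.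

Lemma z2mulA : associative z2mul.
Proof. by move=> x y z; apply: z2_inj => k /=; rewrite modnMml modnMmr mulnA. Qed.
Lemma z2mulC : commutative z2mul.
Proof. by move=> x y; apply: z2_inj => k /=; rewrite mulnC. Qed.
Lemma z2mul1 : left_id z2one z2mul.
Proof. by move=> x; apply: z2_inj => k /=; rewrite modnMml mul1n z2_small. Qed.
Lemma z2mulDl : left_distributive z2mul (@GRing.add Z2).
Proof.
by move=> x y z; apply: z2_inj => k /=; rewrite modnMml modnDm mulnDl.
Qed.
Lemma z2one_neq0 : z2one != (0%R : Z2).
Proof.
apply/eqP => e; have := congr1 (fun x => z2v x 1) e.
by rewrite /= /z2zero /=.
Qed.

HB.instance Definition _ :=
  GRing.Zmodule_isComNzRing.Build Z2 z2mulA z2mulC z2mul1 z2mulDl z2one_neq0.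

(* Lattices given by matrices.  A Z_2-lattice of rank r is Z_2^r (column    *)
(* vectors 'cV_r); a group element acts by left multiplication by a matrix. *)
Local Open Scope ring_scope.

Definition mx_of_rows (s : seq (seq int)) : 'M[Z2]_11 :=
  \matrix_(i < 11, j < 11) ((nth 0 (nth [::] s i) j)%:~R).

(* C_2 x C_2 x C_2 = <n> x <b> x <c> acts on Z_2^r through An, Ab, Ac:
   this is a group action iff the generators are commuting involutions. *)
Definition C2cube_action (r : nat) (An Ab Ac : 'M[Z2]_r) : Prop :=
  [/\ An *m An = 1%:M, Ab *m Ab = 1%:M & Ac *m Ac = 1%:M] /\
  [/\ An *m Ab = Ab *m An, An *m Ac = Ac *m An & Ab *m Ac = Ac *m Ab].

(* U = Z_2^r is a permutation Z_2G-module (G = <n,b,c>): there is a Z_2-basis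
   (the columns of an invertible matrix P) permuted by each generator. *)
Definition is_perm_module3 (r : nat) (An Ab Ac : 'M[Z2]_r) : Prop :=
  exists (P Q : 'M[Z2]_r) (sn sb sc : 'S_r),
    [/\ P *m Q = 1%:M, Q *m P = 1%:M,
        An *m P = P *m perm_mx sn, Ab *m P = P *m perm_mx sb
      & Ac *m P = P *m perm_mx sc].

(* U^N (N = <n>) is a permutation Z_2[G/N]-module (G/N generated by the
   images of b, c): there is a permutation Z_2[G/N]-module Z_2^m (b, c acting
   by permutation matrices) and a G/N-equivariant Z_2-linear isomorphism psi
   from Z_2^m onto U^N = {u | An u = u}. *)
Definition fixed_is_perm (r : nat) (An Ab Ac : 'M[Z2]_r) : Prop :=
  exists (m : nat) (psi : 'M[Z2]_(r, m)) (sb sc : 'S_m),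
    [/\ forall v : 'cV[Z2]_m, psi *m v = 0 -> v = 0,
        forall u : 'cV[Z2]_r, (An *m u = u <-> exists v, u = psi *m v),
        Ab *m psi = psi *m perm_mx sb
      & Ac *m psi = psi *m perm_mx sc].

(* U_N = U / I_N U = U / (1 - n)U is a permutation Z_2[G/N]-module: there is
   a permutation Z_2[G/N]-module Z_2^m and a surjective G/N-equivariant
   Z_2-linear map phi : U -> Z_2^m whose kernel is exactly (1 - n)U
   (so phi induces an isomorphism U_N ~= Z_2^m). *)
Definition coinv_is_perm (r : nat) (An Ab Ac : 'M[Z2]_r) : Prop :=
  exists (m : nat) (phi : 'M[Z2]_(m, r)) (sb sc : 'S_m),
    [/\ (forall v : 'cV[Z2]_m, exists u, phi *m u = v),
        forall u : 'cV[Z2]_r,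
          (phi *m u = 0 <-> exists w, u = (1%:M - An) *m w),
        phi *m Ab = perm_mx sb *m phi
      & phi *m Ac = perm_mx sc *m phi].

Definition A_n : 'M[Z2]_11 := mx_of_rows
  [:: [:: 1;0;0;0;0;0;0;0;0;0;0];
      [:: 0;1;0;0;0;0;0;0;0;0;0];
      [:: 0;0;1;0;0;0;0;0;0;0;0];
      [:: 0;0;0;1;0;0;0;0;0;0;0];
      [:: 0;1;0;0;1;0;0;1;1;1;1];
      [:: 0;1;0;0;0;1;0;1;1;1;1];
      [:: 0;-1;0;0;0;0;1;-1;-1;-1;-1];
      [:: 0;-1;0;0;0;0;0;-1;0;0;0];
      [:: 0;0;-1;1;0;0;0;0;-1;0;0];
      [:: 0;-1;1;0;0;0;0;0;0;-1;0];
      [:: 0;0;0;-1;0;0;0;0;0;0;-1] ]%Z.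

Definition A_b : 'M[Z2]_11 := mx_of_rows
  [:: [:: 1;0;0;0;0;0;0;0;0;0;0];
      [:: 0;1;0;0;0;0;0;0;0;0;0];
      [:: 0;0;1;0;0;0;0;0;0;0;0];
      [:: 0;0;0;1;0;0;0;0;0;0;0];
      [:: 0;0;0;1;0;1;0;0;0;1;1];
      [:: 0;1;-1;0;1;0;0;0;0;1;1];
      [:: 1;0;1;-1;-1;-1;-1;0;0;-1;-1];
      [:: 0;0;0;0;0;0;0;1;0;0;0];
      [:: 0;0;0;0;0;0;0;0;1;0;0];
      [:: 0;-1;1;0;0;0;0;0;0;-1;0];
      [:: 0;0;0;-1;0;0;0;0;0;0;-1] ]%Z.

Definition A_c : 'M[Z2]_11 := mx_of_rows
  [:: [:: 1;0;0;0;0;0;0;0;0;0;0];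
      [:: 0;1;0;0;0;0;0;0;0;0;0];
      [:: 0;0;1;0;0;0;0;0;0;0;0];
      [:: 0;0;0;1;0;0;0;0;0;0;0];
      [:: 0;0;0;1;0;0;1;-1;0;-1;0];
      [:: 1;1;0;0;-1;-1;-1;-1;0;-1;0];
      [:: 0;0;0;-1;1;0;0;1;0;1;0];
      [:: 0;0;0;0;0;0;0;1;0;0;0];
      [:: 0;0;-1;1;0;0;0;0;-1;0;0];
      [:: 0;0;0;0;0;0;0;0;0;1;0];
      [:: 0;0;0;-1;0;0;0;0;0;0;-1] ]%Z.

From HB Require Import structures.
From mathcomp Require Import all_boot all_order all_algebra all_fingroup.
Set Implicit Arguments. Unset Strict Implicit. Unset Printing Implicit Defensive.
Import GRing.Theory.

(* The claims about U^N and U_N are certified by explicit integer matrices: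
   a basis psi of U^N with a left inverse, and a presentation phi of U_N with
   a right inverse, each together with a matrix witnessing exactness.
   Suppose now that G permutes a Z_2-basis X of U.  Every A_g with g <> 1 has
   trace 3, so g fixes exactly 3 points of X; and the eight A_g sum to twice
   an integer matrix, so every stabiliser G_x has even order.  Counting pairs
   (g, x) with gx = x gives sum_x |G_x| = 11 + 7 * 3 = 32 over the 11 points
   of X, so some G_x = {1, g} has order 2.  The orbit of x then has 4 points,
   all fixed by g because G is abelian: g fixes at least 4 points, a
   contradiction. *)

Definition C2cube := (bool * bool * bool)%type.
Definition cube0 : C2cube := (false, false, false).
Definition cube_add (e f : C2cube) : C2cube :=
  (e.1.1 (+) f.1.1, e.1.2 (+) f.1.2, e.2 (+) f.2).

Lemma cube_addC : commutative cube_add.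
Proof. by do 2!case=> [[[] []] []]. Qed.

Lemma cube_complement g : exists h k, pairwise
  (fun e f => cube_add e f \notin [set cube0; g]) [:: cube0; h; k; cube_add h k].
Proof.
pose n : C2cube := (true, false, false); pose b : C2cube := (false, true, false).
pose c : C2cube := (false, false, true).
case: g => [[[] []] []];
  [exists n, b | exists c, n | exists n, b | exists c, b
  | exists n, b | exists c, n | exists n, b | exists n, b]; by rewrite /= !inE.
Qed.

Lemma card_set_sumb (I : finType) (P : pred I) : #|[set i | P i]| = \sum_i P i.
Proof. by rewrite -sum1dep_card big_mkcond; apply: eq_bigr => i _; case: (P i). Qed.

Section InvolutionsAction.
Variables (T : Type) (sn sb sc : T -> T).
Hypotheses (sn_invol : involutive sn) (sb_invol : involutive sb) (sc_invol : involutive sc).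
Hypotheses (snb : forall x, sn (sb x) = sb (sn x)) (snc : forall x, sn (sc x) = sc (sn x))
  (sbc : forall x, sb (sc x) = sc (sb x)).

Definition cube_act (e : C2cube) (x : T) : T :=
  (if e.2 then sc else id) ((if e.1.2 then sb else id) ((if e.1.1 then sn else id) x)).

Lemma cube_actD e f x : cube_act e (cube_act f x) = cube_act (cube_add e f) x.
Proof.
case: e f => [[[] []] []] [[[] []] []]; rewrite /cube_act /=;
  by do ?[rewrite snb | rewrite snc | rewrite sbc | rewrite sn_invol
         | rewrite sb_invol | rewrite sc_invol].
Qed.

End InvolutionsAction.

Section C2cubeAction.
Variables (T : finType) (act : C2cube -> T -> T).
Hypotheses (act0 : forall x, act cube0 x = x)
  (actD : forall e f x, act e (act f x) = act (cube_add e f) x).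

Definition cube_fix e := [set x | act e x == x].
Definition cube_stab x := [set e | act e x == x].

Lemma sum_card_stab : \sum_x #|cube_stab x| = \sum_e #|cube_fix e|.
Proof.
under eq_bigr do rewrite card_set_sumb; rewrite exchange_big.
by under [RHS]eq_bigr do rewrite card_set_sumb.
Qed.

Lemma stab_fix_orbit g x e : g \in cube_stab x -> act e x \in cube_fix g.
Proof. by rewrite !inE actD cube_addC -actD => /eqP ->. Qed.

Lemma card_fix_stab2 g x : cube_stab x = [set cube0; g] -> 4 <= #|cube_fix g|.
Proof.
move=> stab_x; have [h [k orbit_free]] := cube_complement g.
pose orbit := map (act^~ x) [:: cube0; h; k; cube_add h k].
have uniq_orbit : uniq orbit.
  rewrite uniq_pairwise pairwise_map; apply: sub_pairwise orbit_free => e f.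
  apply: contra => /eqP exf; rewrite -stab_x inE.
  by rewrite -actD -exf actD [cube_add e e]/cube_add !addbb act0.
rewrite -[4]/(size orbit) -(card_uniqP uniq_orbit); apply/subset_leq_card/subsetP.
by move=> _ /mapP[e _ ->]; apply: stab_fix_orbit; rewrite stab_x !inE eqxx orbT.
Qed.

Lemma C2cube_fix3_even_stab_card :
    (forall e, e != cube0 -> #|cube_fix e| = 3) ->
    (forall x, ~~ odd #|cube_stab x|) ->
  #|T| != 11.
Proof.
move=> fix3 stab_even; apply/eqP => card11.
have fix0 : cube_fix cube0 = setT by apply/setP => x; rewrite !inE act0 eqxx.
have sum_stab : \sum_x #|cube_stab x| = 32.
  rewrite sum_card_stab (bigD1 cube0) //= (eq_bigr (fun=> 3)) => [|e /fix3 //].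
  by rewrite fix0 cardsT card11 sum_nat_const [#|_|](cardC1 cube0) !card_prod !card_bool.
have [x stab_lt4] : exists x, #|cube_stab x| < 4.
  apply/existsP; apply: contraT => /existsPn stab_ge4.
  have : \sum_(x : T) 4 <= \sum_x #|cube_stab x|.
    by apply: leq_sum => x _; rewrite leqNgt stab_ge4.
  by rewrite sum_stab sum_nat_const card11.
have stab0 : cube0 \in cube_stab x by rewrite inE act0.
have /cards1P[g stabD1] : #|cube_stab x :\ cube0| == 1.
  move: stab_lt4 (stab_even x); rewrite (cardsD1 cube0) stab0.
  by case: #|_| => [|[|[]]].
have : g \in cube_stab x :\ cube0 by rewrite stabD1 set11.
rewrite !inE => /andP[g_neq0 _].
have /card_fix_stab2 : cube_stab x = [set cube0; g] by rewrite -(setD1K stab0) stabD1.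
by rewrite fix3.
Qed.

End C2cubeAction.

Local Open Scope ring_scope.

Section IntRowMatrices.
Variable R : pzRingType.

Definition int_entry (s : seq (seq int)) (i j : nat) : int := nth 0 (nth [::] s i) j.

Definition int_mx m n (s : seq (seq int)) : 'M[R]_(m, n) :=
  \matrix_(i < m, j < n) (int_entry s i j)%:~R.

Definition rows_mul m k n (s t : seq (seq int)) : seq (seq int) :=
  mkseq (fun i => mkseq (fun j =>
    foldr (fun l acc => int_entry s i l * int_entry t l j + acc) 0 (iota 0 k)) n) m.

Definition rows_add m n (s t : seq (seq int)) : seq (seq int) :=
  mkseq (fun i => mkseq (fun j => int_entry s i j + int_entry t i j) n) m.

Definition rows_id n : seq (seq int) :=
  mkseq (fun i => mkseq (fun j => (i == j)%:Z) n) n.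

Definition rows_trace n (s : seq (seq int)) : int :=
  foldr (fun i acc => int_entry s i i + acc) 0 (iota 0 n).

Lemma foldr_iota_sum (F : nat -> int) k :
  foldr (fun l acc => F l + acc) 0 (iota 0 k) = \sum_(l < k) F l.
Proof. by rewrite -(big_mkord xpredT) /index_iota subn0 unlock. Qed.

Lemma int_mxM m k n s t :
  int_mx m k s *m int_mx k n t = int_mx m n (rows_mul m k n s t).
Proof.
apply/matrixP => i j; rewrite !mxE /int_entry /rows_mul !nth_mkseq //.
rewrite foldr_iota_sum rmorph_sum; apply: eq_bigr => l _.
by rewrite !mxE rmorphM.
Qed.

Lemma int_mxD m n s t : int_mx m n s + int_mx m n t = int_mx m n (rows_add m n s t).
Proof. by apply/matrixP => i j; rewrite !mxE /rows_add /int_entry !nth_mkseq // rmorphD. Qed.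

Lemma int_mx1 n : 1%:M = int_mx n n (rows_id n).
Proof. by apply/matrixP => i j; rewrite !mxE /rows_id /int_entry !nth_mkseq. Qed.

Lemma mxtrace_int_mx n s : \tr (int_mx n n s) = (rows_trace n s)%:~R.
Proof.
rewrite /rows_trace foldr_iota_sum rmorph_sum.
by apply: eq_bigr => i _; rewrite mxE.
Qed.

End IntRowMatrices.

Arguments int_mx {R} m n s.
Arguments int_mx1 {R} n.

Lemma mx_of_rowsE s : mx_of_rows s = int_mx 11 11 s.
Proof. by []. Qed.

Section InvolutionFromSeq.
Variables (n : nat) (l : seq nat).

Definition nth_mod (i : nat) : nat := nth 0 l i %% n.+1.

Hypothesis nth_mod_invol : all (fun i => nth_mod (nth_mod i) == i) (iota 0 n.+1).

Definition nth_ord (i : 'I_n.+1) : 'I_n.+1 := Ordinal (ltn_pmod (nth 0 l i) (ltn0Sn n)).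

Lemma nth_ord_invol : involutive nth_ord.
Proof.
move=> i; apply: val_inj.
by have := allP nth_mod_invol i; rewrite mem_iota add0n ltn_ord => /(_ isT) /eqP.
Qed.

Definition invol_perm : 'S_n.+1 := perm (can_inj nth_ord_invol).

Definition perm_rows : seq (seq int) :=
  mkseq (fun i => mkseq (fun j => (nth_mod i == j)%:Z) n.+1) n.+1.

Lemma perm_mx_invol_perm (R : pzRingType) :
  perm_mx invol_perm = int_mx n.+1 n.+1 perm_rows :> 'M[R]_n.+1.
Proof. by apply/matrixP => i j; rewrite !mxE /perm_rows /int_entry !nth_mkseq // permE. Qed.

End InvolutionFromSeq.

Lemma mxtrace_perm_mx (R : pzSemiRingType) n (s : 'S_n) :
  \tr (perm_mx s) = #|[set i | s i == i]|%:R :> R.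
Proof.
rewrite /mxtrace -sum1dep_card natr_sum [RHS]big_mkcond.
by apply: eq_bigr => i _; rewrite !mxE; case: eqP.
Qed.

Lemma sum_perm_mx_diag (R : pzSemiRingType) (I : finType) n (s : I -> 'S_n) i :
  (\sum_e perm_mx (s e)) i i = #|[set e | s e i == i]|%:R :> R.
Proof.
rewrite summxE -sum1dep_card natr_sum [RHS]big_mkcond.
by apply: eq_bigr => e _; rewrite !mxE; case: eqP.
Qed.

Lemma perm_mx_inj (R : nzSemiRingType) n : injective (@perm_mx R n).
Proof.
move=> s t est; apply/permP => i; apply/eqP.
have := congr1 (fun M : 'M[R]_n => M i (s i)) est.
rewrite !mxE eqxx; case: (t i =P s i) => [-> // | _ /eqP].
by rewrite mulr1n mulr0n oner_eq0.
Qed.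

Section PermSimilar.
Variables (R : comNzRingType) (n : nat) (P Q : 'M[R]_n).
Hypotheses (PQ : P *m Q = 1%:M) (QP : Q *m P = 1%:M).

Lemma intertwined_conj A s : A *m P = P *m perm_mx s -> Q *m A *m P = perm_mx s.
Proof. by move=> AP; rewrite -mulmxA AP mulmxA QP mul1mx. Qed.

Lemma intertwinedM A B s t :
  A *m P = P *m perm_mx s -> B *m P = P *m perm_mx t ->
  A *m B *m P = P *m perm_mx (s * t).
Proof. by move=> AP BP; rewrite perm_mxM -mulmxA BP !mulmxA AP. Qed.

Lemma intertwined_invol A s :
  A *m A = 1%:M -> A *m P = P *m perm_mx s -> involutive s.
Proof.
move=> AA AP x; suff ss1 : (s * s = 1)%g by rewrite -permM ss1 perm1.
apply: (@perm_mx_inj R); rewrite -(intertwined_conj (intertwinedM AP AP)).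
by rewrite AA mulmx1 QP perm_mx1.
Qed.

Lemma intertwined_commute A B s t :
  A *m B = B *m A -> A *m P = P *m perm_mx s -> B *m P = P *m perm_mx t ->
  forall x, s (t x) = t (s x).
Proof.
move=> AB AP BP x; rewrite -!permM; congr (fun_of_perm _ x).
apply: (@perm_mx_inj R); rewrite -(intertwined_conj (intertwinedM AP BP)).
by rewrite -(intertwined_conj (intertwinedM BP AP)) AB.
Qed.

Lemma mxtrace_intertwined A s :
  A *m P = P *m perm_mx s -> \tr A = #|[set i | s i == i]|%:R.
Proof.
move=> AP; rewrite -mxtrace_perm_mx -(intertwined_conj AP) mxtrace_mulC.
by rewrite mulmxA PQ mul1mx.
Qed.

End PermSimilar.

Lemma z2v_natr n k : z2v (n%:R : Z2) k = (n %% 2 ^ k)%N.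
Proof. by elim: n => // n IHn; rewrite mulrS /= IHn modnDm. Qed.

Lemma natr_Z2_inj : injective (GRing.natmul (1 : Z2)).
Proof.
move=> m n emn; have := congr1 (z2v^~ (m + n)) emn.
rewrite !z2v_natr !modn_small // (leq_trans (ltn_expl _ (isT : (1 < 2)%N))) //.
  by rewrite leq_pexp2l // leq_addl.
by rewrite leq_pexp2l // leq_addr.
Qed.

Lemma natr_Z2_double_even m (y : Z2) : m%:R = y + y -> ~~ odd m.
Proof.
move=> emy; have := congr1 (z2v^~ 1) emy.
by rewrite z2v_natr /= addnn !modn2 odd_double; case: (odd m).
Qed.

Section LinearCertificates.
Variables (R : pzRingType) (r m : nat) (A : 'M[R]_r).

(* The last hypothesis says 1 - psi L = K (A - 1), so psi L is the identity on
   the fixed vectors of A. *)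
Lemma fixed_space_param (psi : 'M_(r, m)) (L : 'M_(m, r)) (K : 'M_r) :
    L *m psi = 1%:M -> A *m psi = psi -> psi *m L + K *m A = 1%:M + K ->
  (forall v : 'cV_m, psi *m v = 0 -> v = 0) /\
  (forall u : 'cV_r, A *m u = u <-> exists v, u = psi *m v).
Proof.
move=> Lpsi Apsi psiLK; split=> [v psiv0 | u].
  by rewrite -[v]mul1mx -Lpsi -mulmxA psiv0 mulmx0.
split=> [Au | [v ->]]; last by rewrite mulmxA Apsi.
exists (L *m u); have := congr1 (mulmx^~ u) psiLK.
by rewrite /= !mulmxDl -!mulmxA Au mul1mx => /addIr.
Qed.

(* The last hypothesis says 1 - S phi = (1 - A) K, so the kernel of phi lies
   in (1 - A) U. *)
Lemma coinvariants_param (phi : 'M_(m, r)) (S : 'M_(r, m)) (K : 'M_r) :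
    phi *m S = 1%:M -> phi *m A = phi -> S *m phi + K = 1%:M + A *m K ->
  (forall v : 'cV_m, exists u, phi *m u = v) /\
  (forall u : 'cV_r, phi *m u = 0 <-> exists w, u = (1%:M - A) *m w).
Proof.
move=> phiS phiA SphiK; split=> [v | u].
  by exists (S *m v); rewrite mulmxA phiS mul1mx.
split=> [phiu0 | [w ->]]; last by rewrite mulmxA mulmxBr mulmx1 phiA subrr mul0mx.
exists (K *m u); have := congr1 (mulmx^~ u) SphiK.
rewrite /= !mulmxDl -!mulmxA phiu0 mulmx0 add0r mul1mx => Ku.
by rewrite mul1mx mulNmx {1}Ku addrK.
Qed.

End LinearCertificates.

Ltac int_mx_compute :=
  rewrite ?/A_n ?/A_b ?/A_c ?mx_of_rowsE ?(int_mx1 11) !int_mxM ?int_mxD;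
  congr int_mx; vm_compute; reflexivity.

Lemma A_C2cube_action : C2cube_action A_n A_b A_c.
Proof. by split; split; int_mx_compute. Qed.

Definition swap34_56 : 'S_7 := @invol_perm 6 [:: 0; 1; 2; 4; 3; 6; 5]%N erefl.
Definition swap35_46 : 'S_7 := @invol_perm 6 [:: 0; 1; 2; 5; 6; 3; 4]%N erefl.
Definition swap12_56 : 'S_7 := @invol_perm 6 [:: 0; 2; 1; 3; 4; 6; 5]%N erefl.

Definition fixed_basis_rows : seq (seq int) :=
  [:: [:: 0;0;0;1;1;1;1];
      [:: 0;0;-2;-2;-2;-2;-2];
      [:: 0;-2;-2;-2;-2;-2;-2];
      [:: -2;-2;0;-2;-2;-2;-2];
      [:: -1;-1;-1;-2;-2;-2;-1];
      [:: 0;1;-1;-1;-1;0;-1];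
      [:: 1;0;0;1;2;1;1];
      [:: 0;0;1;1;1;1;1];
      [:: -1;0;1;0;0;0;0];
      [:: 0;-1;0;0;0;0;0];
      [:: 1;1;0;1;1;1;1] ]%Z.

Definition fixed_coord_rows : seq (seq int) :=
  [:: [:: -1;0;0;0;0;0;0;1;-1;0;0];
      [:: 0;0;0;0;0;0;0;0;0;-1;0];
      [:: -1;0;0;0;0;0;0;1;0;0;0];
      [:: 1;0;0;0;-1;-1;-1;-2;0;0;0];
      [:: 0;0;0;0;0;0;1;-1;1;0;0];
      [:: 0;0;0;0;0;1;0;1;0;1;0];
      [:: 0;0;0;0;1;0;0;2;-1;-1;0] ]%Z.

Definition fixed_cert_rows : seq (seq int) :=
  [:: [:: 0;0;0;0;0;0;0;0;0;0;0];
      [:: 0;0;0;0;0;0;0;-1;0;0;0];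
      [:: 0;0;0;0;0;0;0;-1;0;1;0];
      [:: 0;0;0;0;0;0;0;-1;1;1;0];
      [:: 0;0;0;0;0;0;0;0;0;0;0];
      [:: 0;0;0;0;0;0;0;0;0;0;0];
      [:: 0;0;0;0;0;0;0;0;0;0;0];
      [:: 0;0;0;0;0;0;0;0;0;0;0];
      [:: 0;0;0;0;0;0;0;0;0;0;0];
      [:: 0;0;0;0;0;0;0;0;0;0;0];
      [:: 0;0;0;0;1;0;0;1;0;0;0] ]%Z.

Lemma A_fixed_is_perm : fixed_is_perm A_n A_b A_c.
Proof.
have [] := @fixed_space_param _ _ _ A_n (int_mx 11 7 fixed_basis_rows)
  (int_mx 7 11 fixed_coord_rows) (int_mx 11 11 fixed_cert_rows).
- by rewrite (int_mx1 7); int_mx_compute.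
- by int_mx_compute.
- by int_mx_compute.
move=> psi_inj psi_fixed; exists 7, (int_mx 11 7 fixed_basis_rows), swap34_56, swap35_46.
by split=> //; rewrite perm_mx_invol_perm; int_mx_compute.
Qed.

Definition coinv_proj_rows : seq (seq int) :=
  [:: [:: -1;-1;-1;0;0;0;0;0;0;0;0];
      [:: -1;-1;-1;-1;-1;-1;0;-1;-1;-1;-1];
      [:: -2;-2;0;-2;1;1;0;1;1;1;1];
      [:: -1;-1;-1;-1;-1;0;-1;0;0;0;0];
      [:: -2;-1;-2;-1;1;0;1;0;0;0;0];
      [:: -1;-1;-1;-1;0;-1;-1;0;0;0;0];
      [:: -2;-2;-1;0;0;1;1;0;0;0;0] ]%Z.

Definition coinv_section_rows : seq (seq int) :=
  [:: [:: 14;3;3;-1;-1;-7;-7];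
      [:: -9;-2;-2;1;1;4;4];
      [:: -6;-1;-1;0;0;3;3];
      [:: -3;-1;-1;0;0;2;2];
      [:: 4;1;1;-1;0;-2;-2];
      [:: 4;1;1;0;0;-3;-2];
      [:: 0;0;0;0;0;0;0];
      [:: -4;-2;-1;1;0;3;2];
      [:: 0;0;0;0;0;0;0];
      [:: 0;0;0;0;0;0;0];
      [:: 0;0;0;0;0;0;0] ]%Z.

Definition coinv_cert_rows : seq (seq int) :=
  [:: [:: 0;0;0;0;0;0;0;0;0;0;0];
      [:: 0;0;0;0;0;0;0;0;1;1;1];
      [:: 0;0;0;0;0;0;0;0;1;0;1];
      [:: 0;0;0;0;0;0;0;0;0;0;1];
      [:: 0;0;0;0;0;0;0;0;0;0;0];
      [:: 0;0;0;0;0;0;0;0;0;0;0];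
      [:: 0;0;0;0;0;0;0;0;0;0;0];
      [:: 0;0;0;0;0;0;1;0;-1;-1;-1];
      [:: 0;0;0;0;0;0;0;0;0;0;0];
      [:: 0;0;0;0;0;0;0;0;0;0;0];
      [:: 0;0;0;0;0;0;0;0;0;0;0] ]%Z.

Lemma A_coinv_is_perm : coinv_is_perm A_n A_b A_c.
Proof.
have [] := @coinvariants_param _ _ _ A_n (int_mx 7 11 coinv_proj_rows)
  (int_mx 11 7 coinv_section_rows) (int_mx 11 11 coinv_cert_rows).
- by rewrite (int_mx1 7); int_mx_compute.
- by int_mx_compute.
- by int_mx_compute.
move=> phi_onto phi_ker; exists 7, (int_mx 7 11 coinv_proj_rows), swap34_56, swap12_56.
by split=> //; rewrite perm_mx_invol_perm; int_mx_compute.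
Qed.

Definition cube_mx (e : C2cube) : 'M[Z2]_11 :=
  (if e.1.1 then A_n else 1%:M) *m (if e.1.2 then A_b else 1%:M)
    *m (if e.2 then A_c else 1%:M).

Lemma mxtrace_cube_mx e : e != cube0 -> \tr (cube_mx e) = 3.
Proof.
case: e => [[[] []] []] // _;
  rewrite /cube_mx /A_n /A_b /A_c mx_of_rowsE ?(int_mx1 11) !int_mxM mxtrace_int_mx;
  by rewrite [RHS]pmulrn; congr (_ *~ _); vm_compute.
Qed.

Lemma sum_C2cube (V : nmodType) (F : C2cube -> V) :
  \sum_e F e = \sum_(a : bool) \sum_(b : bool) \sum_(c : bool) F (a, b, c).
Proof. by rewrite !pair_bigA; apply: eq_bigr => -[[a b] c]. Qed.

Definition half_sum_rows : seq (seq int) :=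
  [:: [:: 4;0;0;0;0;0;0;0;0;0;0];
      [:: 0;4;0;0;0;0;0;0;0;0;0];
      [:: 0;0;4;0;0;0;0;0;0;0;0];
      [:: 0;0;0;4;0;0;0;0;0;0;0];
      [:: 1;2;0;2;0;0;0;0;0;0;0];
      [:: 1;4;-2;0;0;0;0;0;0;0;0];
      [:: 1;-2;2;-2;0;0;0;0;0;0;0];
      [:: 0;-2;0;0;0;0;0;0;0;0;0];
      [:: 0;0;-2;2;0;0;0;0;0;0;0];
      [:: 0;-2;2;0;0;0;0;0;0;0;0];
      [:: 0;0;0;-2;0;0;0;0;0;0;0] ]%Z.

Lemma sum_cube_mx :
  \sum_e cube_mx e = int_mx 11 11 half_sum_rows + int_mx 11 11 half_sum_rows.
Proof. by rewrite sum_C2cube !big_bool /cube_mx /=; int_mx_compute. Qed.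

Lemma A_not_perm_module : ~ is_perm_module3 A_n A_b A_c.
Proof.
case=> P [Q [sn [sb [sc [PQ QP nP bP cP]]]]].
have [[nn bb cc] [nb nc bc]] := A_C2cube_action.
pose s e : 'S_11 :=
  ((if e.1.1 then sn else 1) * (if e.1.2 then sb else 1) * (if e.2 then sc else 1))%g.
have cube_mxP e : cube_mx e *m P = P *m perm_mx (s e).
  have ifP (b : bool) A t : A *m P = P *m perm_mx t ->
      (if b then A else 1%:M) *m P = P *m perm_mx (if b then t else 1%g).
    by case: b => // _; rewrite mul1mx perm_mx1 mulmx1.
  by apply: intertwinedM; first apply: intertwinedM; apply: ifP.
pose act := cube_act sn sb sc.
have sE e x : s e x = act e x.
  by case: e => [[[] []] []]; rewrite /s /act /cube_act /= !permM ?perm1.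
have actD := cube_actD
  (intertwined_invol QP nn nP) (intertwined_invol QP bb bP) (intertwined_invol QP cc cP)
  (intertwined_commute QP nb nP bP) (intertwined_commute QP nc nP cP)
  (intertwined_commute QP bc bP cP).
have fix3 e : e != cube0 -> #|cube_fix act e| = 3.
  move=> e_neq0; apply: natr_Z2_inj; rewrite -(mxtrace_cube_mx e_neq0).
  rewrite (mxtrace_intertwined PQ QP (cube_mxP e)).
  by congr (_%:R); apply: eq_card => x; rewrite !inE sE.
pose M : 'M[Z2]_11 := int_mx 11 11 half_sum_rows.
have sum_conj : \sum_e perm_mx (s e) = Q *m M *m P + Q *m M *m P.
  rewrite -mulmxDl -mulmxDr -sum_cube_mx mulmx_sumr mulmx_suml.
  by apply: eq_bigr => e _; rewrite (intertwined_conj QP (cube_mxP e)).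
have stab_even x : ~~ odd #|cube_stab act x|.
  apply: (@natr_Z2_double_even _ ((Q *m M *m P) x x)).
  have -> : cube_stab act x = [set e | s e x == x] by apply/setP => e; rewrite !inE sE.
  by rewrite -sum_perm_mx_diag sum_conj mxE.
by have := C2cube_fix3_even_stab_card (fun=> erefl) actD fix3 stab_even; rewrite card_ord.
Qed.

Theorem mainTheorem12 :
  [/\ C2cube_action A_n A_b A_c,
      fixed_is_perm A_n A_b A_c,
      coinv_is_perm A_n A_b A_c
    & ~ is_perm_module3 A_n A_b A_c].
Proof.
split; [exact: A_C2cube_action | exact: A_fixed_is_perm
       | exact: A_coinv_is_perm | exact: A_not_perm_module].
Qed.
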